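(* Let $m,n\ge1$, let $a_1,\dots,a_n$ be distinct nonnegative real numbers, let $m_1,\dots,m_n\ge1$ be integers, let $c_0,\dots,c_{m-1},b_k^{(j)}\in\mathbb{C}$, and let $$r(\lambda)=\lambda^m-c_{m-1}\lambda^{m-1}-\cdots-c_1\lambda-c_0-\sum_{j=1}^n\sum_{k=1}^{m_j}\frac{b_k^{(j)}}{(\lambda-a_j)^k}.$$ If $\lambda_0$ is a zero of $r$, then $$|\lambda_0|\le\frac{\alpha+\beta+\sqrt{(\alpha-\beta)^2+(\gamma+\delta)^2}}{2},$$ where $\alpha=\max_{1\le j\le n}\{a_j+\cos(\frac{\pi}{m_j+1})\}$, $\beta=w(\mathcal{B}_0)$, $\gamma=\sqrt{\sum_{j=1}^n m_j}$, $\delta=\sqrt{\sum_{j=1}^n\sum_{k=1}^{m_j}|b_k^{(j)}|^2}$, and $\mathcal{B}_0$ is the $m\times m$ matrix with $1$'s on the superdiagonal, last row $(c_0,c_1,\dots,c_{m-1})$, and zeros elsewhere.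
   Context: A zero of $r$ is a $\lambda_0\in\mathbb{C}\setminus\{a_1,\dots,a_n\}$ with $r(\lambda_0)=0$. For a square complex matrix $A$, $w(A)=\sup\{|x^*Ax|: x^*x=1\}$ is its numerical radius. *)

From HB Require Import structures.
From mathcomp Require Import all_boot all_order all_algebra.
From mathcomp Require Import all_classical all_reals all_analysis.
From mathcomp Require Import complex.
Set Implicit Arguments. Unset Strict Implicit. Unset Printing Implicit Defensive.
Import Order.TTheory GRing.Theory Num.Theory.
Local Open Scope ring_scope.
Local Open Scope classical_set_scope.

Definition cmod (R : realType) (z : R[i]) : R := Normc.normc z.

Definition adjmx (R : realType) (p q : nat) (A : 'M[R[i]]_(p, q)) : 'M[R[i]]_(q, p) :=
  (map_mx (@Num.conj _) A)^T.

Definition numerical_radius (R : realType) (m : nat) (A : 'M[R[i]]_m) : R :=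
  sup [set cmod ((adjmx x *m A *m x) 0 0) |
        x in [set x : 'cV[R[i]]_m | (adjmx x *m x) 0 0 = 1]].

Definition B0 (R : realType) (m : nat) (c : 'I_m -> R[i]) : 'M[R[i]]_m :=
  \matrix_(i, j) (if (i : nat) == m.-1 then c j
                  else if (j : nat) == i.+1 then 1 else 0).

(* r(lambda); b j k stands for b_{k+1}^{(j)}, k : 'I_(mj j) *)
Definition rfun (R : realType) (m n : nat) (a : 'I_n -> R) (mj : 'I_n -> nat)
    (c : 'I_m -> R[i]) (b : forall j : 'I_n, 'I_(mj j) -> R[i]) (lam : R[i]) : R[i] :=
  lam ^+ m - \sum_(i < m) c i * lam ^+ i
  - \sum_(j < n) \sum_(k < mj j) b j k / (lam - ((a j)%:C)%C) ^+ k.+1.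
Arguments rfun {R m n} a mj c b lam.

From HB Require Import structures.
From mathcomp Require Import all_boot all_order all_algebra.
From mathcomp Require Import all_classical all_reals all_analysis.
From mathcomp Require Import complex.
From mathcomp Require Import ring lra.
Import Order.TTheory GRing.Theory Num.Theory.
Local Open Scope ring_scope.

(* Put [x = (1, lam, ..., lam ^ (m - 1))] and, for each pole, [y_j = (z_j,
   z_j ^ 2, ..., z_j ^ m_j)] with [z_j = 1 / (lam - a_j)].  Then [r lam = 0]
   says that [(x, y)] is an eigenvector, for [lam], of the block matrix with
   diagonal blocks [B0] and [a_j + J_(m_j)], the only off-diagonal entries
   being the [b]'s in the last row of the [x]-block and the entry [x_0 = 1]
   feeding the first entry of each [y_j].  Pairing with [(x, y)], bounding
   each diagonal block by its numerical radius ([w (J_k) = cos (pi / (k + 1))])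
   and the off-diagonal part by Cauchy-Schwarz gives
   [|lam| (p^2 + q^2) <= beta p^2 + alpha q^2 + (gamma + delta) p q] with
   [p = |x| >= 1] and [q = |y|], so [|lam|] is at most the top eigenvalue of
   the real symmetric matrix [[beta, (gamma + delta) / 2],
   [(gamma + delta) / 2, alpha]]. *)

Section RealInequalities.
Context {R : rcfType}.

Lemma sqr_le_sum_sqr {I : finType} (u : I -> R) (i : I) :
  u i ^+ 2 <= \sum_j u j ^+ 2.
Proof. by rewrite (bigD1 i) //= lerDl sumr_ge0 // => j _; apply: sqr_ge0. Qed.

Lemma cauchy_schwarz_sqr {I : finType} (u v : I -> R) :
  (\sum_i u i * v i) ^+ 2 <= (\sum_i u i ^+ 2) * (\sum_i v i ^+ 2).
Proof.
set U := \sum_i u i ^+ 2; set V := \sum_i v i ^+ 2; set W := \sum_i u i * v i.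
have U_ge0 : 0 <= U by rewrite sumr_ge0 // => i _; apply: sqr_ge0.
have V_ge0 : 0 <= V by rewrite sumr_ge0 // => i _; apply: sqr_ge0.
have [U0|U_neq0] := eqVneq U 0.
  have u0 i : u i = 0.
    by apply/eqP; rewrite -sqrf_eq0; apply/eqP/(psumr_eq0P _ U0) => // j _; apply: sqr_ge0.
  have -> : W = 0 by rewrite /W big1 // => i _; rewrite u0 mul0r.
  by rewrite expr0n mulr_ge0.
have U_gt0 : 0 < U by rewrite lt_def U_neq0.
have sum_sqrE : \sum_i (U * v i - W * u i) ^+ 2 = U * (U * V - W ^+ 2).
  transitivity (\sum_i (U ^+ 2 * v i ^+ 2 - 2 * U * W * (u i * v i) + W ^+ 2 * u i ^+ 2)).
    by apply: eq_bigr => i _; ring.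
  rewrite !big_split /= sumrN -!mulr_sumr -/U -/V -/W; ring.
have : 0 <= U * (U * V - W ^+ 2).
  by rewrite -sum_sqrE sumr_ge0 // => i _; apply: sqr_ge0.
by rewrite pmulr_rge0 // subr_ge0.
Qed.

Lemma cauchy_schwarz {I : finType} (u v : I -> R) :
  \sum_i u i * v i <= Num.sqrt (\sum_i u i ^+ 2) * Num.sqrt (\sum_i v i ^+ 2).
Proof.
rewrite -sqrtrM ?sumr_ge0 // => [|i _]; last exact: sqr_ge0.
apply: le_trans (ler_norm _) _; rewrite -sqrtr_sqr.
exact/ler_wsqrtr/cauchy_schwarz_sqr.
Qed.

(* [L] is the top eigenvalue of [[be, s/2], [s/2, al]]: both [L - be] and
   [L - al] are nonnegative and [4 (L - be) (L - al) = s^2]. *)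
Lemma le_sym2_top_eigenvalue (l al be s p q : R) :
  0 <= s -> 0 <= p -> 0 <= q -> 0 < p ^+ 2 + q ^+ 2 ->
  l * (p ^+ 2 + q ^+ 2) <= be * p ^+ 2 + al * q ^+ 2 + s * p * q ->
  l <= (al + be + Num.sqrt ((al - be) ^+ 2 + s ^+ 2)) / 2.
Proof.
move=> s_ge0 p_ge0 q_ge0 pq_gt0 hl.
set D := Num.sqrt _; set L := (al + be + D) / 2.
have D_ge0 : 0 <= D by apply: sqrtr_ge0.
have D2 : D ^+ 2 = (al - be) ^+ 2 + s ^+ 2 by rewrite sqr_sqrtr // addr_ge0 ?sqr_ge0.
have A_ge0 : 0 <= L - be by rewrite /L; nra.
have B_ge0 : 0 <= L - al by rewrite /L; nra.
have det0 : s ^+ 2 = 4 * ((L - be) * (L - al)) by rewrite /L; nra.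
have form_ge : s * p * q <= (L - be) * p ^+ 2 + (L - al) * q ^+ 2.
  move: A_ge0 B_ge0 det0; set A := L - be; set B := L - al => A_ge0 B_ge0 det0.
  have [A0|A_neq0] := eqVneq A 0.
    have -> : s = 0 by apply/eqP; rewrite -sqrf_eq0 det0 A0 mul0r mulr0.
    by rewrite A0 !mul0r add0r mulr_ge0 ?sqr_ge0.
  have A_gt0 : 0 < A by rewrite lt_def A_neq0.
  rewrite -subr_ge0 -(pmulr_rge0 _ A_gt0).
  have -> : A * (A * p ^+ 2 + B * q ^+ 2 - s * p * q)
      = (A * p - s * q / 2) ^+ 2 + (A * B - s ^+ 2 / 4) * q ^+ 2 by field.
  have -> : A * B - s ^+ 2 / 4 = 0 by rewrite det0; field.
  by rewrite mul0r addr0 sqr_ge0.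
rewrite -(ler_pM2r pq_gt0); nra.
Qed.

Lemma two_block_estimate (l al be g d x s P Q : R) :
  1 <= P -> 0 <= Q -> 0 <= g -> 0 <= d -> 0 <= x -> x ^+ 2 <= P ->
  s <= d * Num.sqrt Q ->
  l * P <= be * P + x * s -> l * Q <= al * Q + g * Num.sqrt Q ->
  l <= (al + be + Num.sqrt ((al - be) ^+ 2 + (g + d) ^+ 2)) / 2.
Proof.
move=> P_ge1 Q_ge0 g_ge0 d_ge0 x_ge0 xP s_le hP hQ.
have P_ge0 : 0 <= P := le_trans ler01 P_ge1.
set p := Num.sqrt P in hP *; set q := Num.sqrt Q in s_le hQ *.
have p_ge1 : 1 <= p by rewrite -sqrtr1 ler_wsqrtr.
have q_ge0 : 0 <= q := sqrtr_ge0 Q.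
have x_le : x <= p by rewrite -ler_sqr ?nnegrE ?sqrtr_ge0 // sqr_sqrtr.
rewrite -[P](sqr_sqrtr P_ge0) -/p in hP; rewrite -[Q](sqr_sqrtr Q_ge0) -/q in hQ.
apply: (le_sym2_top_eigenvalue _ _ _ (g + d) p q); rewrite ?addr_ge0 //.
- exact: le_trans ler01 p_ge1.
- by rewrite ltr_wpDr ?sqr_ge0 // exprn_gt0 // (lt_le_trans ltr01 p_ge1).
- have coupling_le : x * s <= p * (d * q).
    by apply: le_trans (ler_wpM2l x_ge0 s_le) _; rewrite ler_wpM2r ?mulr_ge0.
  have g_le : g * q <= g * q * p by rewrite ler_peMr ?mulr_ge0.
  lra.
Qed.

End RealInequalities.

Section AdjacentProducts.
Context {R : realType}.

Lemma sin_nat_mulSS (th : R) (i : nat) :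
  sin (i.+2%:R * th) + sin (i%:R * th) = 2 * cos th * sin (i.+1%:R * th).
Proof.
have -> : i.+2%:R * th = i.+1%:R * th + th by rewrite -(addn1 i.+1) natrD mulrDl mul1r.
have -> : i%:R * th = i.+1%:R * th - th by rewrite -(addn1 i) natrD mulrDl mul1r addrK.
rewrite sinD sinB; ring.
Qed.

Lemma sin_nat_mul_pi_gt0 (K i : nat) : (0 < i < K)%N -> 0 < sin (i%:R * (pi / K%:R) : R).
Proof.
move=> /andP[i_gt0 iK]; apply: sin_gt0_pi; apply/andP; split.
  by rewrite mulr_gt0 ?divr_gt0 ?pi_gt0 ?ltr0n // (ltn_trans i_gt0).
rewrite mulrCA -[ltRHS]mulr1 ltr_pM2l ?pi_gt0 // ltr_pdivrMr ?ltr0n ?(ltn_trans i_gt0) //.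
by rewrite mul1r ltr_nat.
Qed.

(* With [S i = sin (i pi / (K + 2))], the weights [g k = S (k + 2) / S (k + 1)]
   and [h k = S k / S (k + 1)] satisfy [g k * h (k + 1) = 1],
   [g k + h k = 2 cos (pi / (K + 2))] and [g K = h 0 = 0]; summing the AM-GM
   inequalities [2 u (k + 1) u k <= g k u k ^ 2 + h (k + 1) u (k + 1) ^ 2]
   gives the claim. *)
Lemma sum_mul_succ_le_cos (K : nat) (u : nat -> R) :
  \sum_(k < K) u k.+1 * u k <= cos (pi / K.+2%:R) * \sum_(k < K.+1) u k ^+ 2.
Proof.
set th := pi / K.+2%:R; pose S i := sin (i%:R * th).
have S_gt0 i : (0 < i <= K.+1)%N -> 0 < S i by move=> ?; apply: sin_nat_mul_pi_gt0.
have S0 : S 0%N = 0 by rewrite /S mul0r sin0.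
have SK2 : S K.+2 = 0 by rewrite /S /th mulrCA divff ?mulr1 ?sinpi ?pnatr_eq0.
pose g k := S k.+2 / S k.+1; pose h k := S k / S k.+1.
have amgm k : (k < K)%N -> 2 * (u k.+1 * u k) <= g k * u k ^+ 2 + h k.+1 * u k.+1 ^+ 2.
  move=> kK; have S1 : 0 < S k.+1 by apply: S_gt0; rewrite /= ltnS ltnW.
  have S2 : 0 < S k.+2 by apply: S_gt0; rewrite /= !ltnS.
  rewrite -subr_ge0.
  have -> : g k * u k ^+ 2 + h k.+1 * u k.+1 ^+ 2 - 2 * (u k.+1 * u k)
      = (S k.+2 * u k - S k.+1 * u k.+1) ^+ 2 / (S k.+1 * S k.+2).
    by rewrite /g /h; field; rewrite !gt_eqF.
  by rewrite divr_ge0 ?sqr_ge0 // mulr_ge0 ?ltW.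
have ghE k : (k < K.+1)%N -> g k + h k = 2 * cos th.
  move=> kK; rewrite /g /h -mulrDl sin_nat_mulSS mulfK // gt_eqF //.
  exact: S_gt0.
have sum_weights : \sum_(k < K) (g k * u k ^+ 2 + h k.+1 * u k.+1 ^+ 2)
    = 2 * cos th * \sum_(k < K.+1) u k ^+ 2.
  rewrite big_split /= mulr_sumr.
  have -> : \sum_(k < K) g k * u k ^+ 2 = \sum_(k < K.+1) g k * u k ^+ 2.
    by rewrite big_ord_recr /= /g SK2 !mul0r addr0.
  have -> : \sum_(k < K) h k.+1 * u k.+1 ^+ 2 = \sum_(k < K.+1) h k * u k ^+ 2.
    by rewrite big_ord_recl /= /h S0 !mul0r add0r.
  by rewrite -big_split; apply: eq_bigr => k _ /=; rewrite -mulrDl ghE.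
rewrite -(ler_pM2l (ltr0n _ 2)) mulrA -sum_weights mulr_sumr.
by apply: ler_sum => k _; apply: amgm.
Qed.

End AdjacentProducts.

Section ComplexModulus.
Context {R : realType}.
Implicit Types (x y z : R[i]) (r : R).

Lemma cmodE z : `|z| = ((cmod z)%:C)%C. Proof. by []. Qed.

Lemma cmod_ge0 z : 0 <= cmod z.
Proof. by rewrite -(lecR 0 (cmod z)) -cmodE normr_ge0. Qed.

Lemma cmod_eq0 z : (cmod z == 0) = (z == 0).
Proof. by rewrite -(inj_eq (@complexI _)) -cmodE normr_eq0. Qed.

Lemma cmod1 : cmod (1 : R[i]) = 1.
Proof. by apply: complexI; rewrite -cmodE normr1. Qed.

Lemma cmodM x y : cmod (x * y) = cmod x * cmod y.
Proof. exact: Normc.normcM. Qed.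

Lemma cmodJ z : cmod z^* = cmod z.
Proof. by apply: complexI; rewrite -!cmodE norm_conjC. Qed.

Lemma cmodD x y : cmod (x + y) <= cmod x + cmod y.
Proof. exact: le_normcD. Qed.

Lemma cmod_sum {I : finType} (F : I -> R[i]) : cmod (\sum_i F i) <= \sum_i cmod (F i).
Proof.
rewrite -lecR rmorph_sum -cmodE; apply: le_trans (ler_norm_sum _ _ _) _.
by apply: ler_sum => i _; rewrite cmodE.
Qed.

Lemma cmodR r : cmod (r%:C)%C = `|r|.
Proof. by apply: complexI; rewrite -cmodE normc_def /= expr0n addr0 sqrtr_sqr. Qed.

Lemma sqr_cmod z : ((cmod z ^+ 2)%:C)%C = z * z^*.
Proof. by rewrite rmorphXn /= -cmodE normCK. Qed.

End ComplexModulus.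

Section NumericalRadius.
Context {R : realType} {m : nat}.
Implicit Types (A : 'M[R[i]]_m) (v : 'cV[R[i]]_m).

Lemma quadformE A v :
  (adjmx v *m A *m v) 0 0 = \sum_i (v i 0)^* * \sum_j A i j * v j 0.
Proof.
rewrite mxE; under eq_bigr do rewrite mxE mulr_suml.
rewrite exchange_big; apply: eq_bigr => i _; rewrite mulr_sumr.
by apply: eq_bigr => j _; rewrite !mxE mulrA.
Qed.

Lemma adjmx_mulE v : (adjmx v *m v) 0 0 = ((\sum_i cmod (v i 0) ^+ 2)%:C)%C.
Proof.
rewrite mxE rmorph_sum; apply: eq_bigr => i _.
by rewrite !mxE mulrC -sqr_cmod.
Qed.

Lemma adjmxZ (s : R[i]) v : adjmx (s *: v) = s^* *: adjmx v.
Proof. by apply/matrixP => i j; rewrite !mxE rmorphM. Qed.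

Lemma numerical_radius_has_ub A :
  has_ubound [set cmod ((adjmx x *m A *m x) 0 0) |
    x in [set x : 'cV[R[i]]_m | (adjmx x *m x) 0 0 = 1]].
Proof.
exists (\sum_i \sum_j cmod (A i j)) => _ [v /= v_unit <-].
have v_le1 i : cmod (v i 0) <= 1.
  have v1 : \sum_i cmod (v i 0) ^+ 2 = 1 by apply: complexI; rewrite -adjmx_mulE.
  have := sqr_le_sum_sqr (fun i => cmod (v i 0)) i.
  by rewrite v1 -[X in _ <= X -> _](expr1n _ 2) ler_pXn2r ?nnegrE ?cmod_ge0.
rewrite quadformE; apply: le_trans (cmod_sum _) _; apply: ler_sum => i _.
rewrite cmodM cmodJ; apply: le_trans (ler_wpM2r _ (v_le1 i)) _.
  exact: cmod_ge0.
rewrite mul1r; apply: le_trans (cmod_sum _) _; apply: ler_sum => j _.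
by rewrite cmodM ler_piMr ?cmod_ge0.
Qed.

Lemma cmod_quadform_le A v :
  cmod ((adjmx v *m A *m v) 0 0) <= numerical_radius A * \sum_i cmod (v i 0) ^+ 2.
Proof.
set P := \sum_i _.
have [P0|P_neq0] := eqVneq P 0.
  have v0 i : v i 0 = 0.
    apply/eqP; rewrite -cmod_eq0 -sqrf_eq0; apply/eqP.
    by apply: (psumr_eq0P _ P0) => // k _; apply: sqr_ge0.
  rewrite P0 mulr0 quadformE big1 ?cmodR ?normr0 // => i _.
  by rewrite v0 conjC0 mul0r.
have P_gt0 : 0 < P by rewrite lt_def P_neq0 sumr_ge0 // => i _; apply: sqr_ge0.
pose s : R[i] := (((Num.sqrt P)^-1)%:C)%C.
have sJ : s^* = s by apply: conj_Creal; rewrite complex_real.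
have ssE : s * s = ((P^-1)%:C)%C.
  by rewrite -rmorphM /= -invfM -expr2 sqr_sqrtr ?ltW.
have scaleE (B : 'M[R[i]]_m) :
    (adjmx (s *: v) *m B *m (s *: v)) 0 0 = ((P^-1)%:C)%C * (adjmx v *m B *m v) 0 0.
  by rewrite adjmxZ sJ -scalemxAr -!scalemxAl scalerA ssE mxE.
have : cmod ((adjmx (s *: v) *m A *m (s *: v)) 0 0) <= numerical_radius A.
  apply: ub_le_sup; first exact: numerical_radius_has_ub.
  exists (s *: v) => //=.
  rewrite adjmxZ sJ -scalemxAr -scalemxAl scalerA ssE mxE adjmx_mulE.
  by rewrite -rmorphM /= mulVf.
rewrite scaleE cmodM cmodR ger0_norm ?invr_ge0 ?(ltW P_gt0) //.
by rewrite ler_pdivrMl // mulrC.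
Qed.

End NumericalRadius.

Section CompanionMatrix.
Context {R : realType} {m : nat} {c : 'I_m.+1 -> R[i]}.

Lemma B0_mul_powers (lam : R[i]) (i : 'I_m.+1) :
  \sum_j B0 c i j * lam ^+ j =
  if (i : nat) == m then \sum_j c j * lam ^+ j else lam ^+ i.+1.
Proof.
case: eqP => [im|/eqP im]; first by apply: eq_bigr => j _; rewrite mxE /= im eqxx.
have iSm : (i.+1 < m.+1)%N by rewrite ltnS ltn_neqAle im -ltnS ltn_ord.
rewrite (bigD1 (Ordinal iSm)) //= mxE /= (negPf im) eqxx mul1r big1 ?addr0 // => j.
by rewrite mxE /= (negPf im) -val_eqE /= eq_sym => /negPf ->; rewrite mul0r.
Qed.

(* [x = (1, lam, ..., lam ^ m)] satisfies [B0 c x = lam x] up to the defect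
   [s] in its last entry. *)
Lemma companion_bound (lam s : R[i]) :
  lam ^+ m.+1 = \sum_i c i * lam ^+ i + s ->
  cmod lam * \sum_(i < m.+1) cmod (lam ^+ i) ^+ 2 <=
  numerical_radius (B0 c) * \sum_(i < m.+1) cmod (lam ^+ i) ^+ 2
  + cmod (lam ^+ m) * cmod s.
Proof.
move=> lam_root; set P := \sum_i _.
pose x : 'cV[R[i]]_m.+1 := \col_i lam ^+ i.
have xP : \sum_i cmod (x i 0) ^+ 2 = P by apply: eq_bigr => i _; rewrite mxE.
have eigenE : lam * (P%:C)%C = (adjmx x *m B0 c *m x) 0 0 + (lam ^+ m)^* * s.
  rewrite quadformE rmorph_sum mulr_sumr.
  transitivity (\sum_(i < m.+1) ((lam ^+ i)^* * \sum_j B0 c i j * lam ^+ j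
                 + (if (i : nat) == m then (lam ^+ i)^* * s else 0))).
    apply: eq_bigr => i _ /=; rewrite B0_mul_powers sqr_cmod.
    rewrite (_ : lam * _ = (lam ^+ i)^* * lam ^+ i.+1); last by rewrite exprS; ring.
    by case: eqP => [->|_]; rewrite ?addr0 // lam_root mulrDr.
  rewrite big_split /=; congr (_ + _).
    apply: eq_bigr => i _; rewrite !mxE; congr (_ * _).
    by apply: eq_bigr => j _; rewrite [x j 0]mxE.
  by rewrite big_ord_recr /= eqxx big1 ?add0r // => i _; rewrite ltn_eqF.
have -> : cmod lam * P = cmod (lam * (P%:C)%C).
  by rewrite cmodM cmodR ger0_norm // -xP sumr_ge0 // => i _; apply: sqr_ge0.
rewrite eigenE; apply: le_trans (cmodD _ _) _; apply: lerD.
  by rewrite -xP cmod_quadform_le.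
by rewrite cmodM cmodJ.
Qed.

End CompanionMatrix.

Section JordanBlock.
Context {R : realType}.

(* [(z, z ^ 2, ..., z ^ K)] satisfies [(a + J_K) y = lam y] up to the defect
   [z] in its first entry, and [cos (pi / (K + 1))] is the numerical radius of
   the nilpotent Jordan block [J_K]. *)
Lemma pole_powers_bound (a : R) (lam z : R[i]) (K : nat) :
  0 <= a -> (lam - (a%:C)%C) * z = 1 -> (0 < K)%N ->
  cmod lam * \sum_(k < K) cmod (z ^+ k.+1) ^+ 2 <=
  (a + cos (pi / K.+1%:R)) * \sum_(k < K) cmod (z ^+ k.+1) ^+ 2 + cmod z.
Proof.
move=> a_ge0 zE; case: K => [//|K] _; set Q := \sum_k _.
have Q_ge0 : 0 <= Q by rewrite sumr_ge0 // => k _; apply: sqr_ge0.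
have powS k : lam * z ^+ k.+1 = (a%:C)%C * z ^+ k.+1 + z ^+ k.
  by rewrite -[in LHS](subrK (a%:C)%C lam) mulrDl exprS mulrA zE mul1r addrC.
have shiftE : lam * (Q%:C)%C = (a%:C)%C * (Q%:C)%C + \sum_(k < K.+1) z ^+ k * (z ^+ k.+1)^*.
  rewrite rmorph_sum !mulr_sumr -big_split; apply: eq_bigr => k _ /=.
  by rewrite sqr_cmod mulrA powS; ring.
have -> : cmod lam * Q = cmod (lam * (Q%:C)%C) by rewrite cmodM cmodR ger0_norm.
rewrite shiftE; apply: le_trans (cmodD _ _) _.
rewrite cmodM !cmodR !ger0_norm // mulrDl -addrA lerD2l.
apply: le_trans (cmod_sum _) _; rewrite big_ord_recl /= expr0 mul1r cmodJ expr1 addrC.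
rewrite lerD2l; under eq_bigr do rewrite cmodM cmodJ mulrC.
exact: (sum_mul_succ_le_cos K (fun k => cmod (z ^+ k.+1))).
Qed.

End JordanBlock.

Section PoleParts.
Context {R : realType} {n : nat} (mj : 'I_n -> nat).

Definition pole_sqr_norm (z : 'I_n -> R[i]) : R :=
  \sum_j \sum_(k < mj j) cmod (z j ^+ k.+1) ^+ 2.

Lemma pole_sqr_norm_ge0 z : 0 <= pole_sqr_norm z.
Proof. by rewrite !sumr_ge0 // => j _; rewrite sumr_ge0 // => k _; apply: sqr_ge0. Qed.

Lemma cmod_pole_sum_le (b : forall j, 'I_(mj j) -> R[i]) z :
  cmod (\sum_j \sum_(k < mj j) b j k * z j ^+ k.+1) <=
  Num.sqrt (\sum_j \sum_(k < mj j) cmod (b j k) ^+ 2) * Num.sqrt (pole_sqr_norm z).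
Proof.
pose nb j := Num.sqrt (\sum_(k < mj j) cmod (b j k) ^+ 2).
pose nz j := Num.sqrt (\sum_(k < mj j) cmod (z j ^+ k.+1) ^+ 2).
have sqr_sqrt_sum (I : finType) (u : I -> R) :
    Num.sqrt (\sum_i u i ^+ 2) ^+ 2 = \sum_i u i ^+ 2.
  by rewrite sqr_sqrtr // sumr_ge0 // => i _; apply: sqr_ge0.
apply: le_trans (cmod_sum _) _; apply: (@le_trans _ _ (\sum_j nb j * nz j)).
  apply: ler_sum => j _; apply: le_trans (cmod_sum _) _.
  by under eq_bigr do rewrite cmodM; apply: cauchy_schwarz.
apply: le_trans (cauchy_schwarz nb nz) _.
under eq_bigr do rewrite sqr_sqrt_sum.
by under [X in _ * Num.sqrt X]eq_bigr do rewrite sqr_sqrt_sum.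
Qed.

Lemma pole_sqr_norm_bound (a : 'I_n -> R) (lam : R[i]) z :
  (forall j, 0 <= a j) -> (forall j, (0 < mj j)%N) ->
  (forall j, (lam - ((a j)%:C)%C) * z j = 1) ->
  cmod lam * pole_sqr_norm z <=
  \big[Num.max/0]_j (a j + cos (pi / (mj j).+1%:R)) * pole_sqr_norm z
  + Num.sqrt (\sum_j (mj j)%:R) * Num.sqrt (pole_sqr_norm z).
Proof.
move=> a_ge0 mj_gt0 zE; set alpha := \big[Num.max/0]_j _.
have defect_le : \sum_j cmod (z j) <= Num.sqrt (\sum_j (mj j)%:R) * Num.sqrt (pole_sqr_norm z).
  have := cauchy_schwarz (fun j => 1) (fun j => cmod (z j)).
  under eq_bigr do rewrite mul1r; move/le_trans; apply.
  apply: ler_pM; rewrite ?sqrtr_ge0 //; apply/ler_wsqrtr/ler_sum => j _.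
    by rewrite expr1n ler1n.
  by have := sqr_le_sum_sqr (fun k : 'I_(mj j) => cmod (z j ^+ k.+1)) (Ordinal (mj_gt0 j)).
apply: (@le_trans _ _ (alpha * pole_sqr_norm z + \sum_j cmod (z j))); last by rewrite lerD2l.
rewrite !mulr_sumr -big_split; apply: ler_sum => j _ /=.
apply: le_trans (pole_powers_bound _ _ _ _ (a_ge0 j) (zE j) (mj_gt0 j)) _.
rewrite lerD2r ler_wpM2r ?sumr_ge0 // => [k _|]; first exact: sqr_ge0.
exact: le_bigmax.
Qed.

End PoleParts.

Section RationalFunctionRoot.
Context {R : realType} {m n : nat} {a : 'I_n -> R} {mj : 'I_n -> nat}.
Context {c : 'I_m -> R[i]} {b : forall j : 'I_n, 'I_(mj j) -> R[i]} {lam : R[i]}.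

Lemma rfun_root_powerE :
  rfun a mj c b lam = 0 ->
  lam ^+ m = \sum_i c i * lam ^+ i
             + \sum_j \sum_(k < mj j) b j k * ((lam - ((a j)%:C)%C)^-1) ^+ k.+1.
Proof.
move/eqP; rewrite subr_eq0 subr_eq addrC => /eqP ->; congr (_ + _).
by apply: eq_bigr => j _; apply: eq_bigr => k _; rewrite exprVn.
Qed.

End RationalFunctionRoot.

Theorem theorem3p5 (R : realType) (m n : nat) (a : 'I_n -> R) (mj : 'I_n -> nat)
    (c : 'I_m -> R[i]) (b : forall j : 'I_n, 'I_(mj j) -> R[i]) (lam0 : R[i]) :
  (1 <= m)%N -> (1 <= n)%N ->
  injective a -> (forall j, 0 <= a j) -> (forall j, (1 <= mj j)%N) ->
  (forall j, lam0 != ((a j)%:C)%C) -> rfun a mj c b lam0 = 0 ->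
  let alpha := \big[Num.max/0]_(j < n) (a j + cos (pi / (mj j).+1%:R)) in
  let beta := numerical_radius (B0 c) in
  let gamma := Num.sqrt (\sum_(j < n) (mj j)%:R) in
  let delta := Num.sqrt (\sum_(j < n) \sum_(k < mj j) cmod (b j k) ^+ 2) in
  cmod lam0 <= (alpha + beta + Num.sqrt ((alpha - beta) ^+ 2 + (gamma + delta) ^+ 2)) / 2.
Proof.
case: m c => [|m] c; first by [].
move=> _ _ _ a_ge0 mj_gt0 lam0_neq r0 /=.
pose z j := (lam0 - ((a j)%:C)%C)^-1.
have zE j : (lam0 - ((a j)%:C)%C) * z j = 1 by rewrite mulfV // subr_eq0.
pose S := \sum_j \sum_(k < mj j) b j k * z j ^+ k.+1.
apply: (two_block_estimate _ _ _ _ _ (cmod (lam0 ^+ m)) (cmod S)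
  (\sum_(i < m.+1) cmod (lam0 ^+ i) ^+ 2) (pole_sqr_norm mj z)).
- by apply: le_trans (sqr_le_sum_sqr _ ord0); rewrite expr0 cmod1 expr1n.
- exact: pole_sqr_norm_ge0.
- exact: sqrtr_ge0.
- exact: sqrtr_ge0.
- exact: cmod_ge0.
- exact: (sqr_le_sum_sqr (fun i : 'I_m.+1 => cmod (lam0 ^+ i)) ord_max).
- exact: cmod_pole_sum_le.
- exact: companion_bound (rfun_root_powerE r0 : _ = _ + S).
- exact: pole_sqr_norm_bound.
Qed.
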